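(* Let $n\ge3$ and $u\ge2$ be integers with $\gcd(u,n)=1$, and let $a$ be a square-free rational integer such that every prime divisor of $n$ divides $a$. Let $F(x)=x^n-a^u\in\mathbb{Z}[x]$. Then $F(x)$ is irreducible over $\mathbb{Q}$. Moreover, letting $K=\mathbb{Q}(\alpha)$ with $\alpha$ a root of $F(x)$ and $\mathbb{Z}_K$ the ring of integers of $K$: (1) $\mathbb{Z}[\alpha]\neq\mathbb{Z}_K$; (2) there exists $\theta\in\mathbb{Z}_K$ with $K=\mathbb{Q}(\theta)$ and $\mathbb{Z}_K=\mathbb{Z}[\theta]$; that is, $K$ is monogenic.
   Context: A number field $K$ is monogenic if there is $\theta\in\mathbb{Z}_K$ such that $\{1,\theta,\dots,\theta^{[K:\mathbb{Q}]-1}\}$ is a $\mathbb{Z}$-basis of $\mathbb{Z}_K$. *)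

(* number fields realised as subfields of algC. *)
From mathcomp Require Import all_boot all_order all_algebra all_field.
Set Implicit Arguments. Unset Strict Implicit. Unset Printing Implicit Defensive.
Import Order.TTheory GRing.Theory Num.Theory.
Local Open Scope ring_scope.

Definition Fpoly (n u : nat) (a : int) : {poly rat} :=
  'X^n - ((a ^+ u)%:~R)%:P.

Definition squarefree_int (a : int) : Prop :=
  a != 0 /\ forall p : nat, prime p -> ~~ ((p * p)%N %| `|a|%N)%N.

(* Q(t) as a subset of algC: values of rational polynomials at t. *)
Definition Qadj (t x : algC) : Prop :=
  exists p : {poly rat}, x = (map_poly ratr p).[t].

(* Z[t]: values of integer polynomials at t. *)
Definition Zadj (t x : algC) : Prop :=
  exists p : {poly int}, x = (map_poly intr p).[t].

Definition ZK (t x : algC) : Prop := Qadj t x /\ x \in Aint.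

(* Write u v = k n + 1 and theta = alpha^v / a^k; then theta^n = a and theta^u = alpha,
   so Q(alpha) = Q(theta) is generated by a root of x^n - a.
   Irreducibility of x^n - a^u: the product t of the roots of a monic factor of degree m
   is rational with t^n = +-a^(u m); comparing valuations at a prime p exactly dividing a
   gives n | u m, hence n | m.
   Z[theta] is the whole ring of integers: if (sum c_i theta^i) / p is integral for a
   prime p, then p divides every c_i.  For p | a this is the Eisenstein argument
   (multiply by theta^(n-1-j) and induct on j); for p coprime to a, hence to n, averaging
   over the conjugates z^k theta isolates n c_j theta^j / p.  In both cases an n-th power
   reduces the claim to a rational algebraic integer, i.e. an integer.
   Finally theta = a^-k alpha^v is integral, but its coordinates in the power basis of
   alpha are not all integers, so Z[alpha] is not the ring of integers. *)

From mathcomp Require Import all_boot all_order all_algebra all_field.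
From mathcomp Require Import ring zify.
Set Implicit Arguments. Unset Strict Implicit. Unset Printing Implicit Defensive.
Import Order.TTheory GRing.Theory Num.Theory.
Local Open Scope ring_scope.

Lemma irreducible_root_dvdp (F L : fieldType) (f : {rmorphism F -> L})
    (p q : {poly F}) (x : L) :
  irreducible_poly p -> root (map_poly f p) x -> root (map_poly f q) x -> p %| q.
Proof.
move=> irr_p px qx; have p_neq0 : p != 0 by rewrite -size_poly_gt0 ltnW //; case: irr_p.
suffices /eqp_dvdl <-: gcdp p q %= p by apply: dvdp_gcdr.
rewrite irr_p ?dvdp_gcdl ?gtn_eqF // -(size_map_poly f) gcdp_map /=.
by rewrite (@root_size_gt1 _ x) ?root_gcd ?px // gcdp_eq0 map_poly_eq0 negb_and p_neq0.
Qed.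

Lemma irreducible_root_eq0 (F L : fieldType) (f : {rmorphism F -> L})
    (p q : {poly F}) (x : L) :
    irreducible_poly p -> root (map_poly f p) x -> root (map_poly f q) x ->
  (size q < size p)%N -> q = 0.
Proof.
move=> irr_p px qx; apply: contraTeq => q_neq0.
by rewrite -leqNgt dvdp_leq // (irreducible_root_dvdp irr_p px qx).
Qed.

Lemma irreducible_root_conj (F L : fieldType) (f : {rmorphism F -> L})
    (p q : {poly F}) (x y : L) :
    irreducible_poly p -> root (map_poly f p) x -> root (map_poly f p) y ->
  root (map_poly f q) x -> root (map_poly f q) y.
Proof.
move=> irr_p px py /(irreducible_root_dvdp irr_p px) /dvdpP[r ->].
by rewrite rmorphM rootM py orbT.
Qed.

Lemma Aint_horner_conj (p g : {poly rat}) (x y : algC) :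
    irreducible_poly p -> root (map_poly ratr p) x -> root (map_poly ratr p) y ->
  (map_poly ratr g).[x] \in Aint -> (map_poly ratr g).[y] \in Aint.
Proof.
move=> irr_p px py gxA; have [P [DP monP] minP] := minCpolyP (map_poly ratr g).[x].
have Pgx : root (map_poly ratr (P \Po g)) x.
  by rewrite map_comp_poly /root horner_comp -/(root _ _) minP dvdpp.
move: (irreducible_root_conj irr_p px py Pgx).
rewrite map_comp_poly /root horner_comp => Pgy.
by apply: (@root_monic_Aint (minCpoly (map_poly ratr g).[x])) gxA; rewrite DP ?map_monic.
Qed.

Lemma Qadj_trans (s t x : algC) : Qadj s t -> Qadj t x -> Qadj s x.
Proof.
move=> [q ->] [r ->]; exists (r \Po q).
by rewrite map_comp_poly horner_comp.
Qed.

Lemma Zadj_ZK (t x : algC) : t \in Aint -> Zadj t x -> ZK t x.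
Proof.
move=> tA [P ->]; split.
  exists (map_poly intr P); rewrite -map_poly_comp.
  by congr (_.[_]); apply: eq_map_poly => z /=; rewrite rmorph_int.
rewrite horner_coef; apply: rpred_sum => i _.
by rewrite coef_map rpredM ?Aint_int ?rpredX.
Qed.

Lemma horner_root_monic_reduced (p q : {poly rat}) (t : algC) :
    p \is monic -> root (map_poly ratr p) t ->
  exists c : nat -> rat,
    (map_poly ratr q).[t] = \sum_(i < (size p).-1) ratr (c i) * t ^+ i.
Proof.
move=> monp pt; exists (fun i => (q %% p)`_i).
rewrite {1}(divp_eq q p) rmorphD rmorphM /= hornerD hornerM (rootP pt) mulr0 add0r.
rewrite (@horner_coef_wide _ (size p).-1); last first.
  by rewrite size_map_poly -ltnS prednK ?ltn_modp ?monic_neq0 // size_poly_gt0 monic_neq0.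
by apply: eq_bigr => i _; rewrite coef_map.
Qed.

Lemma logn_squarefree (a : int) (p : nat) :
  squarefree_int a -> prime p -> (p%:Z %| a)%Z -> logn p `|a| = 1%N.
Proof.
move=> [a_neq0 sqf_a] pp pa; have a_gt0 : (0 < `|a|)%N by rewrite absz_gt0.
apply/eqP; rewrite eqn_leq -(pfactor_dvdn 1 pp a_gt0) expn1.
rewrite (_ : p %| `|a| = true)%N ?andbT; last by move: pa; rewrite dvdzE.
by rewrite leqNgt -(pfactor_dvdn 2 pp a_gt0) expnS expn1 (negbTE (sqf_a p pp)).
Qed.

Lemma logn_eq1_dvdz (p : nat) (a : int) : logn p `|a| = 1%N -> (p%:Z %| a)%Z.
Proof.
move=> la; have : (0 < logn p `|a|)%N by rewrite la.
by rewrite logn_gt0 mem_primes dvdzE => /and3P[].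
Qed.

Lemma dvdz_of_Aint_div_expn (p N : nat) (c r : int) :
    prime p -> r != 0 -> (logn p `|r| < N)%N ->
  (c%:~R ^+ N * r%:~R / p%:R ^+ N : algC) \in Aint -> (p%:Z %| c)%Z.
Proof.
move=> pp r_neq0 lt_r_N xA.
have xQ : (c%:~R ^+ N * r%:~R / p%:R ^+ N : algC) \in Crat.
  by rewrite rpredM ?rpredV ?rpredX ?rpredM ?rpredX ?rpred_int ?rpred_nat.
have /intrP[m Dm] := Cint_rat_Aint xQ xA.
have p_neq0 : (p%:R : algC) != 0 by rewrite pnatr_eq0 -lt0n prime_gt0.
have Em : m * p%:Z ^+ N = c ^+ N * r.
  by apply: (@intr_inj algC); rewrite !rmorphM /= !rmorphXn /= -Dm divfK ?expf_neq0.
apply: contraLR lt_r_N => p_ndvd_c; rewrite -leqNgt.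
have c_neq0 : c != 0 by apply: contraNneq p_ndvd_c => ->; rewrite dvdz0.
have m_neq0 : m != 0.
  by apply: contra_eq_neq Em => ->; rewrite mul0r eq_sym mulf_neq0 ?expf_neq0.
have /(congr1 (fun z => logn p `|z|)) := Em.
rewrite !abszM !abszX /= !lognM ?expn_gt0 ?absz_gt0 ?prime_gt0 ?c_neq0 //.
rewrite (pfactorK N pp) lognX.
by rewrite (@logn_coprime p `|c|) ?prime_coprime -?dvdzE // muln0 add0n => <-; apply: leq_addl.
Qed.

Definition pure_poly (n : nat) (b : int) : {poly rat} := 'X^n - (b%:~R)%:P.

Lemma root_pure_poly (n : nat) (b : int) (w : algC) :
  root (map_poly ratr (pure_poly n b)) w = (w ^+ n == b%:~R).
Proof.
by rewrite rmorphB /= map_polyXn map_polyC /= rmorph_int rootE !hornerE subr_eq0.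
Qed.

Lemma dvdn_of_rat_expn_eq (p n m u s : nat) (a : int) (t : rat) :
    (0 < n)%N -> prime p -> logn p `|a| = 1%N ->
  t ^+ n = ((-1) ^+ s * (a ^+ u)%:~R) ^+ m -> (n %| u * m)%N.
Proof.
move=> n_gt0 pp la Et.
have a_neq0 : a != 0 by apply: contraPneq la => ->; rewrite logn0.
have Enum : numq t ^+ n = ((-1) ^+ s * a ^+ u) ^+ m * denq t ^+ n.
  apply: (@intr_inj rat); rewrite rmorphXn /= numqE exprMn Et.
  by rewrite rmorphM /= !rmorphXn /= rmorphM /= rmorphXn /= rmorphN rmorph1 rmorphXn.
have num_gt0 : (0 < `|numq t|)%N.
  rewrite absz_gt0 numq_eq0; apply: contraPneq Et => ->.
  rewrite expr0n gtn_eqF // => /esym/eqP; apply/negP.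
  by rewrite !(expf_neq0, mulf_neq0, signr_eq0, intr_eq0).
have /(congr1 (fun z => logn p `|z|)) := Enum.
rewrite abszM !abszX abszM !abszX /= exp1n mul1n -expnM.
rewrite lognM ?expn_gt0 ?absz_gt0 ?denq_neq0 ?a_neq0 //.
rewrite !(lognX p) la muln1 => E.
have -> : (u * m = n * logn p `|numq t| - n * logn p `|denq t|)%N.
  by rewrite E mulnC addnK.
by rewrite -mulnBr dvdn_mulr.
Qed.

Lemma dvdp_XnsubC_const_expn (n : nat) (c : rat) (q : {poly rat}) :
    q != 0 -> q %| 'X^n - c%:P ->
  (q.[0] / lead_coef q) ^+ n = ((-1) ^+ n * c) ^+ (size q).-1.
Proof.
(* q.[0] / lead_coef q is, up to the sign (-1)^(size q).-1, the product of the roots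
   of q, and each of them is an n-th root of c *)
move=> q_neq0 dvd_q; set Q := map_poly (ratr : rat -> algC) q.
have [r DQ] := closed_field_poly_normal Q.
have lQ_neq0 : lead_coef Q != 0 by rewrite lead_coef_eq0 map_poly_eq0.
have size_r : size r = (size q).-1.
  rewrite -(size_map_poly (ratr : {rmorphism rat -> algC})) -/Q DQ.
  by rewrite size_scale // size_prod_XsubC.
have r_roots z : z \in r -> z ^+ n = ratr c.
  move=> zr; have : root Q z by rewrite DQ rootZ // root_prod_XsubC.
  move/(root_dvdp (etrans (dvdp_map ratr _ _) dvd_q)).
  by rewrite rmorphB /= map_polyXn map_polyC rootE !hornerE subr_eq0 => /eqP.
apply: (fmorph_inj (ratr : rat -> algC)).
rewrite !rmorphXn /= fmorph_div /= -horner_map /= rmorph0 -lead_coef_map -/Q.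
rewrite {1}DQ hornerZ mulrC mulrA mulVf // mul1r horner_prod -prodrXl.
rewrite (eq_big_seq (fun=> (-1) ^+ n * ratr c)); last first.
  by move=> z zr /=; rewrite hornerXsubC sub0r -(r_roots z zr) -exprNn.
rewrite (big_const_seq _ _ _ predT) count_predT iter_mulr_1 size_r.
by rewrite rmorphM rmorphXn rmorphN1.
Qed.

Lemma irreducible_pure_poly_expn (n u p : nat) (a : int) :
    (0 < n)%N -> coprime u n -> prime p -> logn p `|a| = 1%N ->
  irreducible_poly (pure_poly n (a ^+ u)).
Proof.
move=> n_gt0 cop_un pp la; have size_H := size_XnsubC ((a ^+ u)%:~R : rat) n_gt0.
split=> [|q size_q_neq1 dvd_q]; first by rewrite size_H.
have H_neq0 : pure_poly n (a ^+ u) != 0 by rewrite -size_poly_gt0 size_H.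
have q_neq0 : q != 0 by apply: contraNneq H_neq0 => q0; rewrite -dvd0p -q0.
have q_gt1 : (1 < size q)%N by rewrite ltn_neqAle eq_sym size_q_neq1 size_poly_gt0.
have [m size_q] : {m | size q = m.+1} by exists (size q).-1; rewrite prednK // ltnW.
rewrite -dvdp_size_eqp // size_H size_q eqSS eqn_leq -ltnS -size_q -size_H dvdp_leq //=.
apply: dvdn_leq; first by rewrite -ltnS -size_q.
rewrite -(@Gauss_dvdr n u) 1?coprime_sym //.
have := @dvdp_XnsubC_const_expn n (a ^+ u)%:~R q q_neq0 dvd_q.
by rewrite size_q; apply: dvdn_of_rat_expn_eq n_gt0 pp la.
Qed.

Lemma horner_map_ratr_poly (n : nat) (g : nat -> rat) (x : algC) :
  (map_poly ratr (\poly_(i < n) g i)).[x] = \sum_(i < n) ratr (g i) * x ^+ i.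
Proof.
rewrite (@horner_coef_wide _ n) ?size_map_poly ?size_poly //.
by apply: eq_bigr => i _; rewrite coef_map coef_poly ltn_ord.
Qed.

Lemma prim_root_sum_expn (R : idomainType) (n m : nat) (z : R) :
  n.-primitive_root z -> \sum_(k < n) (z ^+ m) ^+ k = if (n %| m)%N then n%:R else 0.
Proof.
move=> prim_z; rewrite (prim_order_dvd prim_z); case: eqP => [-> | /eqP zm_neq1].
  by rewrite (eq_bigr (fun=> 1)) ?sumr_const ?card_ord // => k _; rewrite expr1n.
have : (z ^+ m) ^+ n - 1 = 0 by rewrite exprAC (prim_expr_order prim_z) expr1n subrr.
by rewrite subrX1 => /eqP; rewrite mulf_eq0 subr_eq0 (negbTE zm_neq1) => /eqP.
Qed.

Lemma dvdn_add_sub (n i j : nat) : (i < n)%N -> (j < n)%N -> (n %| i + (n - j))%N = (i == j).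
Proof.
move=> lt_i_n lt_j_n; case: (ltngtP i j) => [lt_ij | lt_ji | ->].
- by rewrite gtnNdvd //; lia.
- have -> : (i + (n - j) = n + (i - j))%N by lia.
  by rewrite dvdn_addr // gtnNdvd //; lia.
- by rewrite subnKC ?dvdnn // ltnW.
Qed.

Section PureRoot.

Variables (n : nat) (a : int) (th : algC).
Hypotheses (n_gt0 : (0 < n)%N) (th_root : th ^+ n = a%:~R).

Local Notation zcomb c := (\sum_(i < n) (c i)%:~R * th ^+ i).

Lemma Aint_pure_root : th \in Aint.
Proof.
apply: (@root_monic_Aint ('X^n - (a%:~R)%:P)); first by rewrite rootE !hornerE th_root subrr.
  exact: monicXnsubC.
by rewrite polyOverXnsubC intr_int.
Qed.

Lemma dvdz_of_Aint_scaled_root (p j : nat) (c r : int) :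
    prime p -> r != 0 -> a != 0 -> (logn p `|(r ^+ n * a ^+ j)%R| < n)%N ->
  (c%:~R / p%:R * r%:~R * th ^+ j) \in Aint -> (p%:Z %| c)%Z.
Proof.
move=> pp r_neq0 a_neq0 lt_log_n /(rpredX n).
have -> : (c%:~R / p%:R * r%:~R * th ^+ j) ^+ n =
    c%:~R ^+ n * (r ^+ n * a ^+ j)%:~R / p%:R ^+ n :> algC.
  by rewrite !exprMn -exprM mulnC exprM th_root rmorphM /= !rmorphXn exprVn; ring.
by apply: dvdz_of_Aint_div_expn; rewrite ?mulf_neq0 ?expf_neq0.
Qed.

Lemma dvdz_coef_ramified (p : nat) (c : nat -> int) :
    prime p -> logn p `|a| = 1%N -> zcomb c / p%:R \in Aint ->
  forall j, (j < n)%N -> (p%:Z %| c j)%Z.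
Proof.
move=> pp la yA; have [b Da] := dvdzP (logn_eq1_dvdz la).
have a_neq0 : a != 0 by apply: contraPneq la => ->; rewrite logn0.
have p_neq0 : (p%:R : algC) != 0 by rewrite pnatr_eq0 -lt0n prime_gt0.
have thA := Aint_pure_root.
elim/ltn_ind => j IHj lt_j_n.
apply: (@dvdz_of_Aint_scaled_root p n.-1 _ 1) => //.
  by rewrite expr1n mul1r abszX lognX la muln1 prednK ?leqnn.
set rest := \sum_(i < n | i != Ordinal lt_j_n) (c i)%:~R / p%:R * th ^+ (i + (n.-1 - j)).
have Ey : th ^+ (n.-1 - j) * (zcomb c / p%:R) = (c j)%:~R / p%:R * 1%:~R * th ^+ n.-1 + rest.
  have le_j_n1 : (j <= n.-1)%N by rewrite -ltnS prednK.
  rewrite mulrCA mulr_suml (bigD1 (Ordinal lt_j_n)) //=; congr (_ + _).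
    by rewrite -[in RHS](subnKC le_j_n1) exprD rmorph1; ring.
  by apply: eq_bigr => i _; rewrite exprD; ring.
(* the lower coefficients are divisible by p by induction, and the higher powers
   of th pick up a factor a = b p *)
have restA : rest \in Aint.
  apply: rpred_sum => i /= i_neq_j; have [lt_ij | lt_ji | eq_ij] := ltngtP i j.
  - have [d ->] := dvdzP (IHj i lt_ij (ltn_trans lt_ij lt_j_n)).
    by rewrite rmorphM /= mulrK ?unitfE // rpredM ?Aint_int ?rpredX.
  - have -> : (i + (n.-1 - j) = n + (i.-1 - j))%N by move: (ltn_ord i) lt_ji; lia.
    rewrite exprD th_root Da rmorphM /=.
    have -> : (c i)%:~R / p%:R * (b%:~R * p%:R * th ^+ (i.-1 - j)) =
              (c i)%:~R * b%:~R * th ^+ (i.-1 - j) :> algC by field.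
    by rewrite !rpredM ?Aint_int ?rpredX.
  - by move: i_neq_j; rewrite -val_eqE /= eq_ij eqxx.
by rewrite -(rpredDr _ restA) -Ey rpredM ?rpredX.
Qed.

Hypothesis irr_th : irreducible_poly (pure_poly n a).

Lemma dvdz_coef_unramified (p : nat) (c : nat -> int) :
    prime p -> ~~ (p %| `|a|)%N -> ~~ (p %| n)%N -> zcomb c / p%:R \in Aint ->
  forall j, (j < n)%N -> (p%:Z %| c j)%Z.
Proof.
move=> pp p_ndvd_a p_ndvd_n yA j lt_j_n.
have a_neq0 : a != 0 by apply: contraNneq p_ndvd_a => ->; rewrite dvdn0.
have [z prim_z] := C_prim_root_exists n_gt0.
pose g := \poly_(i < n) ((c i)%:~R / p%:R : rat).
have g_horner (x : algC) : (map_poly ratr g).[x] = \sum_(i < n) (c i)%:~R / p%:R * x ^+ i.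
  rewrite horner_map_ratr_poly; apply: eq_bigr => i _.
  by rewrite fmorph_div /= rmorph_int rmorph_nat.
have conjA k : \sum_(i < n) (c i)%:~R / p%:R * (z ^+ k * th) ^+ i \in Aint.
  rewrite -g_horner; apply: (Aint_horner_conj irr_th (x := th)).
  - by rewrite root_pure_poly th_root.
  - by rewrite root_pure_poly exprMn exprAC (prim_expr_order prim_z) expr1n mul1r th_root.
  - rewrite g_horner; move: yA; rewrite mulr_suml.
    by under eq_bigr do rewrite mulrAC.
(* averaging the conjugates z^k th against z^(-kj) isolates the j-th coefficient *)
have Esum : \sum_(k < n) z ^+ (k * (n - j)) *
    \sum_(i < n) (c i)%:~R / p%:R * (z ^+ k * th) ^+ i =
    (c j)%:~R / p%:R * (n%:Z)%:~R * th ^+ j.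
  rewrite (eq_bigr (fun k : 'I_n => \sum_(i < n)
      (c i)%:~R / p%:R * th ^+ i * (z ^+ (i + (n - j))) ^+ k)); last first.
    move=> k _; rewrite mulr_sumr; apply: eq_bigr => i _.
    by rewrite exprMn -!exprM (mulnC k i) (mulnC k (n - j)%N) mulnDl exprD; ring.
  rewrite exchange_big /=.
  under eq_bigr => i _ do
    rewrite -mulr_sumr (prim_root_sum_expn _ prim_z) (dvdn_add_sub (ltn_ord i) lt_j_n).
  rewrite (bigD1 (Ordinal lt_j_n)) //= eqxx big1 ?addr0 => [|i]; first by rewrite mulrAC.
  by rewrite -val_eqE /= => /negbTE ->; rewrite mulr0.
apply: (@dvdz_of_Aint_scaled_root p j _ n) => //.
- by rewrite -lt0n.
- rewrite logn_coprime ?prime_coprime // abszM !abszX /= Euclid_dvdM // !Euclid_dvdX //.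
  by rewrite (negbTE p_ndvd_n) (negbTE p_ndvd_a).
rewrite -Esum; apply: rpred_sum => k _.
by rewrite rpredM ?rpredX ?(Aint_prim_root prim_z).
Qed.

Hypotheses (sqf_a : squarefree_int a)
  (rad_n_dvd_a : forall p : nat, prime p -> (p %| n)%N -> (p%:Z %| a)%Z).

Lemma dvdz_coef_prime (p : nat) (c : nat -> int) :
    prime p -> zcomb c / p%:R \in Aint -> forall j, (j < n)%N -> (p%:Z %| c j)%Z.
Proof.
move=> pp yA; have [pa | p_ndvd_a] := boolP (p %| `|a|)%N.
  by apply: dvdz_coef_ramified pp (logn_squarefree sqf_a pp _) yA; rewrite dvdzE.
have p_ndvd_n : ~~ (p %| n)%N.
  by apply: contra p_ndvd_a => /(rad_n_dvd_a pp); rewrite dvdzE.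
exact: dvdz_coef_unramified pp p_ndvd_a p_ndvd_n yA.
Qed.

Lemma dvdz_coef (d : nat) (c : nat -> int) :
    (0 < d)%N -> zcomb c / d%:R \in Aint -> forall j, (j < n)%N -> (d%:Z %| c j)%Z.
Proof.
elim/ltn_ind: d c => d IHd c d_gt0 yA j lt_j_n.
have [-> | d_neq1] := eqVneq d 1; first exact: dvd1z.
set p := pdiv d.
have pp : prime p by rewrite /p pdiv_prime // ltn_neqAle eq_sym d_neq1.
have [e De] : {e | d = (e * p)%N} by exists (d %/ p)%N; rewrite divnK ?pdiv_dvd.
have e_gt0 : (0 < e)%N by move: d_gt0; rewrite De muln_gt0 => /andP[].
have p_neq0 : p%:R != 0 :> algC by rewrite pnatr_eq0 -lt0n prime_gt0.
have e_neq0 : e%:R != 0 :> algC by rewrite pnatr_eq0 -lt0n.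
have /dvdz_coef_prime dvd_p : zcomb c / p%:R \in Aint.
  have -> : zcomb c / p%:R = e%:R * (zcomb c / d%:R).
    by rewrite De natrM; field; rewrite e_neq0 p_neq0.
  by rewrite rpredM ?rpred_nat.
pose c' i := (c i %/ p%:Z)%Z.
have Dc i : (i < n)%N -> c i = c' i * p%:Z by move=> lt_i_n; rewrite divzK ?dvd_p.
rewrite Dc // De PoszM dvdz_mul2r ?eqz_nat -?lt0n ?prime_gt0 // IHd //.
  by rewrite De ltn_Pmulr // prime_gt1.
suff -> : zcomb c' / e%:R = zcomb c / d%:R by [].
rewrite De natrM !mulr_suml; apply: eq_bigr => i _.
by rewrite (Dc i) // rmorphM /=; field; rewrite e_neq0 p_neq0.
Qed.

Lemma Aint_coef_int (g : nat -> rat) :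
    \sum_(i < n) ratr (g i) * th ^+ i \in Aint -> forall j, (j < n)%N -> g j \is a Num.int.
Proof.
move=> yA j lt_j_n.
pose d := (\prod_(i < n) `|denq (g i)|)%N.
have d_gt0 : (0 < d)%N by rewrite prodn_gt0 // => i; rewrite absz_gt0 denq_neq0.
have d_neq0 : d%:R != 0 :> rat by rewrite pnatr_eq0 -lt0n.
have gd_int i : (i < n)%N -> g i * d%:R \is a Num.int.
  move=> lt_i_n; rewrite -[g i]divq_num_den mulrAC -mulrA rpredM ?rpred_int //.
  rewrite -[d%:R]/((d%:Z)%:~R) Qint_dvdz // dvdzE /=.
  by rewrite /d (bigD1 (Ordinal lt_i_n)) //= dvdn_mulr.
pose c i := numq (g i * d%:R).
have Dc i : (i < n)%N -> (c i)%:~R = g i * d%:R by move/gd_int/numqK.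
have cA : zcomb c / d%:R \in Aint.
  suff -> : zcomb c / d%:R = \sum_(i < n) ratr (g i) * th ^+ i by [].
  rewrite mulr_suml; apply: eq_bigr => i _.
  rewrite -[(c i)%:~R](rmorph_int ratr) Dc // rmorphM /= rmorph_nat.
  by field; rewrite pnatr_eq0 -lt0n.
have [k Dk] := dvdzP (dvdz_coef d_gt0 cA lt_j_n).
by rewrite -(mulfK d_neq0 (g j)) -Dc // Dk rmorphM mulfK // rpred_int.
Qed.

Lemma ZK_pure_root (x : algC) : ZK th x <-> Zadj th x.
Proof.
split=> [[[q ->] xA] | ]; last exact: Zadj_ZK Aint_pure_root.
have th_root' : root (map_poly ratr (pure_poly n a)) th.
  by rewrite root_pure_poly th_root.
have [g Dx] := horner_root_monic_reduced q (monicXnsubC _ n_gt0) th_root'.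
rewrite size_XnsubC // /= in Dx; rewrite Dx in xA *.
exists (\poly_(i < n) numq (g i)); rewrite (@horner_coef_wide _ n); last first.
  by rewrite size_map_inj_poly ?size_poly //; apply: intr_inj.
apply: eq_bigr => i _; rewrite coef_map coef_poly ltn_ord /=.
by rewrite -[in LHS](numqK (Aint_coef_int xA (ltn_ord i))) rmorph_int.
Qed.

End PureRoot.

Lemma Zadj_horner_int_poly (n : nat) (b : int) (alpha : algC) (q : {poly rat}) :
    (0 < n)%N -> irreducible_poly (pure_poly n b) -> alpha ^+ n = b%:~R ->
    (size q <= n)%N ->
  Zadj alpha (map_poly ratr q).[alpha] -> exists P : {poly int}, q = map_poly intr P.
Proof.
move=> n_gt0 irr alpha_root size_q [P EP].
pose F : {poly int} := 'X^n - b%:P; have monF : F \is monic by apply: monicXnsubC.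
pose R := Pdiv.Ring.rmodp P F; exists R.
have size_R : (size R <= n)%N.
  by have := Pdiv.Ring.ltn_rmodp P F; rewrite monic_neq0 // size_XnsubC.
have ER : (map_poly intr P).[alpha] = (map_poly intr R).[alpha] :> algC.
  rewrite {1}(Pdiv.RingMonic.rdivp_eq monF P) rmorphD rmorphM /= hornerD hornerM.
  by rewrite rmorphB /= map_polyXn map_polyC /= !hornerE alpha_root subrr mulr0 add0r.
apply/eqP; rewrite eq_sym -subr_eq0; apply/eqP.
apply: (@irreducible_root_eq0 _ _ ratr _ _ alpha irr).
- by rewrite root_pure_poly alpha_root.
- rewrite /root rmorphB !hornerE /= -map_poly_comp.
  by rewrite (eq_map_poly (fun z => rmorph_int ratr z)) EP ER subrr.
rewrite size_XnsubC // ltnS (leq_trans (size_polyD _ _)) // geq_max size_polyN size_q.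
by rewrite size_map_inj_poly ?size_R //; apply: intr_inj.
Qed.

Lemma coprime_inverse_modn (u n : nat) : (1 < n)%N -> (1 < u)%N -> coprime u n ->
  exists v k, [/\ (v < n)%N, (0 < k)%N & (u * v = k * n + 1)%N].
Proof.
move=> n_gt1 u_gt1 cop_un; have [x y] := egcdnP n (ltnW u_gt1).
rewrite (eqP cop_un) => Exy _; pose v := (x %% n)%N.
have uv_mod : ((u * v) %% n = 1)%N.
  by rewrite /v modnMmr mulnC Exy modnMDl modn_small.
exists v, ((u * v) %/ n)%N; split; first by rewrite ltn_pmod // ltnW.
  rewrite lt0n; apply: contraTneq u_gt1 => uv_lt_n.
  move: (divn_eq (u * v) n); rewrite uv_lt_n uv_mod mul0n add0n => /eqP.
  by rewrite muln_eq1 => /andP[/eqP ->].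
by rewrite {1}(divn_eq (u * v) n) uv_mod.
Qed.

Lemma pure_root_descent (n u v k : nat) (a : int) (alpha : algC) :
    a != 0 -> (u * v = k * n + 1)%N -> alpha ^+ n = (a ^+ u)%:~R ->
  (alpha ^+ v / a%:~R ^+ k) ^+ n = a%:~R /\ (alpha ^+ v / a%:~R ^+ k) ^+ u = alpha.
Proof.
move=> a_neq0 uv alpha_root; set c : algC := a%:~R.
have c_neq0 : c != 0 by rewrite intr_eq0.
have c_uv : c ^+ (u * v) = c * c ^+ (k * n).
  by rewrite uv addn1 exprS.
have alpha_uv : alpha ^+ (u * v) = alpha * c ^+ (u * k).
  by rewrite uv addn1 exprS mulnC exprM alpha_root rmorphXn -exprM.
rewrite !expr_div_n -!exprM; split.
  by rewrite [(v * n)%N]mulnC exprM alpha_root rmorphXn -exprM c_uv mulfK ?expf_neq0.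
by rewrite [(v * u)%N]mulnC alpha_uv [(k * u)%N]mulnC mulfK ?expf_neq0.
Qed.

Lemma horner_scale_Xn (c : int) (v k : nat) (s : algC) :
  (map_poly ratr ((c%:~R ^- k : rat) *: 'X^v)).[s] = s ^+ v / c%:~R ^+ k.
Proof.
by rewrite map_polyZ /= map_polyXn hornerZ hornerXn fmorphV rmorphXn rmorph_int mulrC.
Qed.

Lemma not_Zadj_scaled_expn (n u v k : nat) (a : int) (alpha : algC) :
    (0 < n)%N -> (v < n)%N -> (0 < k)%N -> (1 < `|a|)%N ->
    irreducible_poly (pure_poly n (a ^+ u)) ->
    alpha ^+ n = (a ^+ u)%:~R ->
  ~ Zadj alpha (alpha ^+ v / a%:~R ^+ k).
Proof.
move=> n_gt0 lt_v_n k_gt0 a_gt1 irr alpha_root.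
rewrite -horner_scale_Xn; case/(Zadj_horner_int_poly n_gt0 irr alpha_root).
  by rewrite (leq_trans (size_scale_leq _ _)) // size_polyXn.
move=> P /(congr1 (coefp v)); rewrite /= coefZ coefXn eqxx mulr1 coef_map /=.
move/(congr1 (fun r : rat => r * a%:~R ^+ k)); rewrite mulVf ?expf_neq0 ?intr_eq0 //.
  rewrite -rmorphXn -rmorphM => /esym/eqP; rewrite -(rmorph1 intr) eqr_int => /eqP.
  move/(congr1 absz); rewrite abszM abszX /= => /eqP; rewrite muln_eq1 => /andP[_].
  by rewrite -(expn0 `|a|) eqn_exp2l // (gtn_eqF k_gt0).
by rewrite -absz_gt0 ltnW.
Qed.

Theorem theorem2p7 (n u : nat) (a : int) :
  (3 <= n)%N -> (2 <= u)%N -> coprime u n -> squarefree_int a ->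
  (forall p : nat, prime p -> (p %| n)%N -> (p%:Z %| a)%Z) ->
  irreducible_poly (Fpoly n u a) /\
  (forall alpha : algC, root (map_poly ratr (Fpoly n u a)) alpha ->
     ~ (forall x, ZK alpha x <-> Zadj alpha x) /\
     exists theta : algC, ZK alpha theta /\
       (forall x, Qadj alpha x <-> Qadj theta x) /\
       (forall x, ZK alpha x <-> Zadj theta x)).
Proof.
move=> n_ge3 u_ge2 cop_un sqf_a rad_n_dvd_a.
have n_gt1 : (1 < n)%N by apply: leq_trans n_ge3.
have n_gt0 : (0 < n)%N by apply: ltnW.
have pp := pdiv_prime n_gt1.
have la := logn_squarefree sqf_a pp (rad_n_dvd_a _ pp (pdiv_dvd n)).
have a_gt1 : (1 < `|a|)%N by have := la; case: `|a|%N => [|[|m]] //; rewrite ?logn0 ?logn1.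
have irrF := irreducible_pure_poly_expn n_gt0 cop_un pp la.
have irrG := irreducible_pure_poly_expn n_gt0 (coprime1n n) pp la; rewrite expr1 in irrG.
split=> // alpha; rewrite root_pure_poly => /eqP alpha_root.
have [v [k [lt_v_n k_gt0 uv]]] := coprime_inverse_modn n_gt1 u_ge2 cop_un.
have a_neq0 : a != 0 by rewrite -absz_gt0 ltnW.
have [th_root th_u] := pure_root_descent a_neq0 uv alpha_root.
set th := alpha ^+ v / a%:~R ^+ k in th_root th_u *.
have Qadj_alpha_th : Qadj alpha th by exists ((a%:~R ^- k : rat) *: 'X^v); rewrite horner_scale_Xn.
have Qadj_th_alpha : Qadj th alpha by exists 'X^u; rewrite map_polyXn hornerXn th_u.
have Qadj_eq x : Qadj alpha x <-> Qadj th x by split; apply: Qadj_trans.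
have ZK_eq x : ZK alpha x <-> ZK th x by split=> -[/Qadj_eq].
have ZK_th := ZK_pure_root n_gt0 th_root irrG sqf_a rad_n_dvd_a.
have ZK_alpha_th : ZK alpha th by split; last exact: Aint_pure_root n_gt0 th_root.
split=> [monogenic_alpha | ].
  apply: (not_Zadj_scaled_expn n_gt0 lt_v_n k_gt0 a_gt1 irrF alpha_root).
  exact/monogenic_alpha.
exists th; split=> //; split=> // x.
by rewrite -ZK_th; apply: ZK_eq.
Qed.
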